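(* Let $P$ be a definite program and $Q$ an atomic query. If $P$ is order-acceptable with respect to $\{Q\}$, then there exists a minimal quasi-ordering $\ge$ such that $P$ is order-acceptable with respect to $\{Q\}$ via $\ge$.
   Context: A quasi-ordering is a reflexive transitive relation $\ge$; its strict part is $s>t$ iff $s\ge t$ and not $t\ge s$; it is well-founded if there is no infinite chain $s_1>s_2>\cdots$. For a predicate symbol, $\mathit{rel}(A)$ denotes the predicate of atom $A$. Predicate $p$ refers to $q$ in $P$ if some clause has $p$ in its head and $q$ in its body; $p\sqsupseteq q$ is the transitive (not reflexive) closure of ``refers to''; $p\simeq q$ (mutually recursive) iff $p\sqsupseteq q$ and $q\sqsupseteq p$. $\mathrm{Call}(P,S)$ is the set of atoms $A$ such that a variant of $A$ is a selected atom in some branch of the LD-tree (leftmost selection) of $P\cup\{Q\}$ for some $Q\in S$. $P$ is order-acceptable with respect to a set $S$ of atomic queries via a well-founded quasi-ordering $\ge$ on $\mathrm{Call}(P,S)$ if for every $A\in\mathrm{Call}(P,S)$, every (renamed apart) clause $A'\leftarrow B_1,\dots,B_n$ of $P$ such that $\theta=\mathrm{mgu}(A,A')$ exists, every $B_i$ with $\mathit{rel}(B_i)\simeq\mathit{rel}(A)$, and every computed answer substitution $\sigma$ for $\leftarrow(B_1,\dots,B_{i-1})\theta$, we have $A>B_i\theta\sigma$. $P$ is order-acceptable w.r.t. $S$ if such a $\ge$ exists. A quasi-ordering $\ge$ such that $P$ is order-acceptable w.r.t. $\{Q\}$ via $\ge$ is minimal if there is no quasi-ordering $\ge_1\subsetneq\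 \ge$ (as sets of pairs) such that $P$ is order-acceptable w.r.t. $\{Q\}$ via $\ge_1$. *)

From Stdlib Require Import List Relations.
Import ListNotations.

Inductive term : Type :=
| Var (x : nat)
| Fn (f : nat) (ts : list term).

Record atom : Type := mkAtom { rel : nat; args : list term }.

Record clause : Type := mkClause { head : atom; body : list atom }.
Definition program := list clause.

Definition subst := nat -> term.
Definition id_subst : subst := Var.

Fixpoint tsubst (s : subst) (t : term) : term :=
  match t with
  | Var x => s x
  | Fn f ts => Fn f (map (tsubst s) ts)
  end.

Definition asubst (s : subst) (A : atom) : atom :=
  mkAtom (rel A) (map (tsubst s) (args A)).

Definition csubst (s : subst) (c : clause) : clause :=
  mkClause (asubst s (head c)) (map (asubst s) (body c)).

(** composition: first [s1], then [s2] (so  t(s1 s2) = (t s1) s2). *)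
Definition scomp (s1 s2 : subst) : subst := fun x => tsubst s2 (s1 x).

Fixpoint occurs (x : nat) (t : term) : Prop :=
  match t with
  | Var y => x = y
  | Fn _ ts =>
      (fix go (l : list term) : Prop :=
         match l with
         | [] => False
         | u :: l' => occurs x u \/ go l'
         end) ts
  end.

Definition avar (x : nat) (A : atom) : Prop := Exists (occurs x) (args A).
Definition gvar (x : nat) (G : list atom) : Prop := Exists (avar x) G.
Definition cvar (x : nat) (c : clause) : Prop := gvar x (head c :: body c).

Definition unifier (th : subst) (A B : atom) : Prop := asubst th A = asubst th B.

Definition mgu (th : subst) (A B : atom) : Prop :=
  unifier th A B /\
  forall s, unifier s A B -> exists d, forall x, s x = tsubst d (th x).

Definition is_renaming (r : nat -> nat) : Prop :=
  exists r', (forall x, r' (r x) = x) /\ (forall x, r (r' x) = x).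
Definition rename (r : nat -> nat) : subst := fun x => Var (r x).

Definition variant (A B : atom) : Prop :=
  exists r, is_renaming r /\ B = asubst (rename r) A.

(** States are (current goal, accumulated substitution). *)
Inductive ld_step (P : program) (Q0 : list atom) :
  list atom * subst -> list atom * subst -> Prop :=
| LD_step : forall (A : atom) (G : list atom) (acc : subst)
                   (c : clause) (r : nat -> nat) (th : subst),
    In c P -> is_renaming r ->
    (forall x, cvar x (csubst (rename r) c) ->
               ~ gvar x (A :: G) /\ ~ gvar x (map (asubst acc) Q0)) ->
    mgu th A (head (csubst (rename r) c)) ->
    ld_step P Q0 (A :: G, acc)
      (map (asubst th) (body (csubst (rename r) c) ++ G), scomp acc th).

Definition ld_reach (P : program) (Q0 : list atom) (st : list atom * subst) : Prop :=
  clos_refl_trans _ (ld_step P Q0) (Q0, id_subst) st.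

Definition Call (P : program) (Q : atom) (A : atom) : Prop :=
  exists A' G acc, ld_reach P [Q] (A' :: G, acc) /\ variant A A'.

Definition cas (P : program) (G : list atom) (sg : subst) : Prop :=
  exists acc, ld_reach P G ([], acc) /\
    forall x, (gvar x G -> sg x = acc x) /\ (~ gvar x G -> sg x = Var x).

Definition refers (P : program) (p q : nat) : Prop :=
  exists c, In c P /\ rel (head c) = p /\ exists B, In B (body c) /\ rel B = q.
Definition depends (P : program) : nat -> nat -> Prop := clos_trans _ (refers P).
Definition mutrec (P : program) (p q : nat) : Prop := depends P p q /\ depends P q p.

Definition strict (R : atom -> atom -> Prop) (a b : atom) : Prop := R a b /\ ~ R b a.

Definition wf_quasi_order_on (C : atom -> Prop) (R : atom -> atom -> Prop) : Prop :=
  (forall a b, R a b -> C a /\ C b) /\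
  (forall a, C a -> R a a) /\
  (forall a b c, R a b -> R b c -> R a c) /\
  ~ (exists f : nat -> atom, forall n, strict R (f n) (f (S n))).

Definition order_acceptable_via (P : program) (Q : atom) (R : atom -> atom -> Prop) : Prop :=
  wf_quasi_order_on (Call P Q) R /\
  forall A, Call P Q A ->
  forall (c : clause) (r : nat -> nat) (th : subst),
    In c P -> is_renaming r ->
    (forall x, cvar x (csubst (rename r) c) -> ~ avar x A) ->
    mgu th A (head (csubst (rename r) c)) ->
    forall (i : nat) (Bi : atom),
      nth_error (body (csubst (rename r) c)) i = Some Bi ->
      mutrec P (rel Bi) (rel A) ->
      forall sg, cas P (map (asubst th) (firstn i (body (csubst (rename r) c)))) sg ->
      strict R A (asubst sg (asubst th Bi)).

Definition order_acceptable (P : program) (Q : atom) : Prop :=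
  exists R, order_acceptable_via P Q R.

Definition minimal_oa_order (P : program) (Q : atom) (R : atom -> atom -> Prop) : Prop :=
  order_acceptable_via P Q R /\
  ~ (exists R1, order_acceptable_via P Q R1 /\
                (forall a b, R1 a b -> R a b) /\
                (exists a b, R a b /\ ~ R1 a b)).

(* The acceptability conditions only ever compare a call A with an instantiated
   recursive body atom B; call these pairs descents. Any acceptable ordering makes
   every descent strict, hence contains the reflexive-transitive closure of the
   descent relation on Call(P, {Q}). That closure is itself acceptable: a strict
   step in it is a nonempty chain of descents, hence strict in the given
   ordering, so its strict part inherits well-foundedness. Being the least
   acceptable ordering, it is in particular minimal. *)
From Stdlib Require Import List Relations.

Section DescentClosure.

Variables (C : atom -> Prop) (E : atom -> atom -> Prop).

Definition closure_on (a b : atom) : Prop := C a /\ C b /\ clos_refl_trans atom E a b.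

Lemma clos_rt_eq_or_strict (R : atom -> atom -> Prop) :
  (forall a b c, R a b -> R b c -> R a c) ->
  (forall a b, E a b -> strict R a b) ->
  forall a b, clos_refl_trans atom E a b -> a = b \/ strict R a b.
Proof.
  intros Rtrans Estrict a b Hab. apply clos_rt_rt1n in Hab.
  induction Hab as [|x y z Exy _ IH]; [now left|right].
  destruct (Estrict x y Exy) as [Rxy nRyx].
  destruct IH as [<-|[Ryz nRzy]]; [now split|].
  split; [eauto|]. intro Rzx. apply nRyx. eauto.
Qed.

Lemma closure_on_least (R : atom -> atom -> Prop) :
  wf_quasi_order_on C R -> (forall a b, E a b -> R a b) ->
  forall a b, closure_on a b -> R a b.
Proof.
  intros (_ & Rrefl & Rtrans & _) ER a b (Ca & _ & Hab).
  apply clos_rt_rtn1 in Hab.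
  induction Hab as [|y z Eyz _ IH]; [now apply Rrefl|].
  exact (Rtrans _ _ _ IH (ER _ _ Eyz)).
Qed.

Section StrictDescent.

Variable R : atom -> atom -> Prop.
Hypothesis R_wf : wf_quasi_order_on C R.
Hypothesis E_strict : forall a b, E a b -> strict R a b.

Lemma strict_closure_on_strict a b : strict closure_on a b -> strict R a b.
Proof.
  destruct R_wf as (_ & Rrefl & Rtrans & _).
  intros [(Ca & Cb & Hab) nba].
  destruct (clos_rt_eq_or_strict R Rtrans E_strict a b Hab) as [<-|]; [|easy].
  exfalso. apply nba. repeat split; auto using rt_refl.
Qed.

Lemma closure_on_wf_quasi_order : wf_quasi_order_on C closure_on.
Proof.
  destruct R_wf as (_ & _ & _ & Rwf).
  split; [|split; [|split]].
  - now intros a b (Ca & Cb & _).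
  - intros a Ca. repeat split; auto using rt_refl.
  - intros a b c (Ca & _ & Hab) (_ & Cc & Hbc). repeat split; eauto using rt_trans.
  - intros [f Hf]. apply Rwf. exists f. intro n. now apply strict_closure_on_strict.
Qed.

Lemma closure_on_strict_step a b : E a b -> strict closure_on a b.
Proof.
  intros Eab. destruct R_wf as (Rdom & _ & Rtrans & _).
  destruct (E_strict a b Eab) as [Rab nRba].
  destruct (Rdom a b Rab) as [Ca Cb].
  split; [repeat split; auto using rt_step|].
  intros (_ & _ & Hba).
  destruct (clos_rt_eq_or_strict R Rtrans E_strict b a Hba) as [->|[Rba _]];
    now apply nRba.
Qed.

End StrictDescent.

End DescentClosure.

Definition descent (P : program) (Q : atom) (A B : atom) : Prop :=
  Call P Q A /\
  exists (c : clause) (r : nat -> nat) (th : subst),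
    In c P /\ is_renaming r /\
    (forall x, cvar x (csubst (rename r) c) -> ~ avar x A) /\
    mgu th A (head (csubst (rename r) c)) /\
    exists (i : nat) (Bi : atom),
      nth_error (body (csubst (rename r) c)) i = Some Bi /\
      mutrec P (rel Bi) (rel A) /\
      exists sg, cas P (map (asubst th) (firstn i (body (csubst (rename r) c)))) sg /\
      B = asubst sg (asubst th Bi).

Lemma order_acceptable_viaP P Q R :
  order_acceptable_via P Q R <->
  wf_quasi_order_on (Call P Q) R /\ forall A B, descent P Q A B -> strict R A B.
Proof.
  split.
  - intros [Rwf Hacc]. split; [easy|].
    intros A B (CA & c & r & th & Hc & Hr & Hfresh & Hmgu & i & Bi & Hi & Hrec & sg & Hsg & ->).
    eauto.
  - intros [Rwf Hdesc]. split; [easy|].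
    intros A CA c r th Hc Hr Hfresh Hmgu i Bi Hi Hrec sg Hsg.
    apply Hdesc. split; [easy|].
    exists c, r, th. repeat (split; [easy|]).
    exists i, Bi. repeat (split; [easy|]). now exists sg.
Qed.

Theorem mainTheorem7 (P : program) (Q : atom) :
  order_acceptable P Q ->
  exists R : atom -> atom -> Prop, minimal_oa_order P Q R.
Proof.
  intros [R HR]. apply order_acceptable_viaP in HR as [Rwf Rdesc].
  exists (closure_on (Call P Q) (descent P Q)).
  assert (Hacc : order_acceptable_via P Q (closure_on (Call P Q) (descent P Q))).
  { apply order_acceptable_viaP. split.
    - exact (closure_on_wf_quasi_order _ _ _ Rwf Rdesc).
    - exact (closure_on_strict_step _ _ _ Rwf Rdesc). }
  split; [exact Hacc|].
  intros (R1 & HR1 & _ & a & b & Hab & nR1ab).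
  apply order_acceptable_viaP in HR1 as [R1wf R1desc].
  apply nR1ab. apply (closure_on_least _ (descent P Q) R1 R1wf); [|exact Hab].
  intros A B HAB. now apply R1desc.
Qed.
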